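(* Algorithm $\mathsf{EqualCellsCounter}$ (described in the context) has audit complexity $O(n^2)$: there is an auditor which, given $F$ (on $n$ variables), the estimate $C_{est}$ and the certificate $h$ output by $\mathsf{EqualCellsCounter}(F)$, makes a single query to a $\Sigma_2^P$ oracle on a quantified Boolean formula with $O(n^2)$ variables, accepts the algorithm's output, and whenever it accepts, $C_{est}$ is within a factor $16$ of $|\mathrm{Sol}(F)|$.
   Context: $\mathrm{Sol}(F)$ is the set of satisfying assignments of $F$; $\log$ is base 2. $\mathcal{H}(n,m,n)$ is a fixed explicit $n$-wise independent family of hash functions $\{0,1\}^n\to\{0,1\}^m$, each member described by polynomially many bits. For positive integers $\ell,u$, $\varphi^{\langle F,\ell,u\rangle}_{Cells}(m)$ is $\exists h\in\mathcal{H}(n,m,n)\ \forall \alpha\in\{0,1\}^m\ \forall y_1,\dots,y_{u+1}\in\{0,1\}^n\ \exists z_1,\dots,z_\ell\in\{0,1\}^n:$ $\Big(\bigwedge_{i=1}^{u+1}(F(y_i)\wedge h(y_i)=\alpha)\rightarrow\bigvee_{1\le i<j\le u+1}(y_i=y_j)\Big)\wedge\Big(\bigwedge_{i=1}^{\ell}(F(z_i)\wedge h(z_i)=\alpha)\wedge\bigwedge_{1\le i<j\le\ell}(z_i\neq z_j)\Big).$ Algorithm $\mathsf{EqualCellsCounter}(F)$: set $u=16384n$, $\ell=1024n$; for $m=1,\dots,n$ query a $\Sigma_3^P$ oracle on $\varphi^{\langle F,\ell,u\rangle}_{Cells}(m)$; at the first $m$ for which it is true, output $C_{est}=\ell\cdot2^m$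 and the witnessing $h$ as certificate. An auditor for an algorithm $A$ takes $F$, the estimate and the certificate produced by $A$, and uses an oracle to certify that the estimate lies within the claimed approximation factor of $|\mathrm{Sol}(F)|$; $A$ has audit complexity $r$ if it has an auditor making exactly one call to a $\Sigma_2^P$ oracle, on a formula with at most $r$ variables (the paper's auditor recovers $m=\lfloor\log(C_{est}/n)\rfloor-10$ and checks $\varphi^{\langle F,\ell,u\rangle}_{Cells}(m)$ with $h$ substituted by the certificate). *)

From mathcomp Require Import all_boot.
Set Implicit Arguments.
Unset Strict Implicit.
Unset Printing Implicit Defensive.

Definition bv (k : nat) := k.-tuple bool.

Definition sub_bv (N : nat) (x : bv N) (off len : nat) : bv len :=
  [tuple nth false x (off + j) | j < len].

(* A formula F on n variables, given by its semantics; Sol(F). *)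
Definition Sol (n : nat) (F : bv n -> bool) : {set bv n} := [set x | F x].

Definition u_par (n : nat) : nat := 16384 * n.
Definition ell_par (n : nat) : nat := 1024 * n.

(* The explicit hash family H(n,m,n): members of H(n,m,n) are the bit
   strings of length [hlen n m]; [heval n m d] is the hash function
   {0,1}^n -> {0,1}^m described by d. *)
Record hashFamily := HashFamily {
  hlen : nat -> nat -> nat;
  heval : forall n m : nat, seq bool -> bv n -> bv m }.

(* The quantifier-free matrix of phi_Cells^{<F,l,u>}(m) with h substituted
   by (the function described by) [hs].  Universally quantified block x:
   alpha (m bits) followed by y_1..y_{u+1} (n bits each);
   existentially quantified block z: z_1..z_l (n bits each). *)
Definition cells_matrix (H : hashFamily) (n : nat) (F : bv n -> bool)
    (m : nat) (hs : seq bool)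
    (x : bv (m + (u_par n).+1 * n)) (z : bv (ell_par n * n)) : bool :=
  let h := @heval H n m hs in
  let alpha : bv m := sub_bv x 0 m in
  let y := fun i : nat => sub_bv x (m + i * n) n in
  let zz := fun i : nat => sub_bv z (i * n) n in
  [&& ([forall i : 'I_(u_par n).+1, F (y i) && (h (y i) == alpha)] ==>
       [exists i : 'I_(u_par n).+1, exists j : 'I_(u_par n).+1,
          (i < j) && (y i == y j)]),
      [forall i : 'I_(ell_par n), F (zz i) && (h (zz i) == alpha)] &
      [forall i : 'I_(ell_par n), forall j : 'I_(ell_par n),
          (i < j) ==> (zz i != zz j)]].
Arguments cells_matrix H [n] F m hs x z.

Definition cells_holds_with (H : hashFamily) (n : nat) (F : bv n -> bool)
    (m : nat) (hs : seq bool) : Prop :=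
  forall x, exists z, cells_matrix H F m hs x z.

Definition phi_cells (H : hashFamily) (n : nat) (F : bv n -> bool) (m : nat)
  : Prop :=
  exists hs : seq bool, size hs = hlen H n m /\ cells_holds_with H F m hs.

Definition ECC_outputs (H : hashFamily) (n : nat) (F : bv n -> bool)
    (Cest : nat) (cert : seq bool) : Prop :=
  exists m : nat,
    [/\ 1 <= m <= n,
        (forall m', 1 <= m' < m -> ~ phi_cells H F m'),
        size cert = hlen H n m,
        cells_holds_with H F m cert &
        Cest = ell_par n * 2 ^ m].

(* A Sigma_2 query  forall x in {0,1}^nu, exists y in {0,1}^ne, M x y. *)
Record sigma2_query := S2Q {
  s2_nu : nat;
  s2_ne : nat;
  s2_matrix : bv s2_nu -> bv s2_ne -> bool }.

Definition s2_nvars (q : sigma2_query) : nat := s2_nu q + s2_ne q.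

Definition s2_oracle (q : sigma2_query) : Prop :=
  forall x : bv (s2_nu q), exists y : bv (s2_ne q), @s2_matrix q x y.

(* The paper's auditor: recover m = floor(log(Cest/n)) - 10 and query
   phi_Cells(m) with h substituted by the certificate.  If the recovered
   value is out of range (floor(log(Cest/n)) - 10 negative or > n), the
   single query is the trivially false formula with no variables. *)
Definition auditor_query (H : hashFamily) (n : nat) (F : bv n -> bool)
    (Cest : nat) (cert : seq bool) : sigma2_query :=
  let k := trunc_log 2 (Cest %/ n) in
  if (10 <= k <= n + 10)
  then @S2Q _ _ (cells_matrix H F (k - 10) cert)
  else @S2Q 0 0 (fun _ _ => false).

Definition auditor_accepts (H : hashFamily) (n : nat) (F : bv n -> bool)
    (Cest : nat) (cert : seq bool) : Prop :=
  s2_oracle (auditor_query H F Cest cert).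

Definition within_factor (k c s : nat) : Prop := c <= k * s /\ s <= k * c.

(** Let [l = ell_par n] and [u = u_par n = 16 l].  If [h] satisfies
    phi_Cells(m), every cell [{x in Sol F | h x = alpha}] has between [l]
    and [u] elements: the existential block [z_1..z_l] lists [l] distinct
    members, while [u + 1] distinct members would violate the universal
    block.  Summing over the [2^m] cells, [l 2^m <= |Sol F| <= 16 l 2^m].
    The auditor computes [k = floor(log(Cest / n))] and checks the cell
    condition at [m = k - 10], where [l 2^m = n 2^k]; since
    [n 2^k <= Cest < 2 n 2^k], [Cest] is within a factor 16 of [|Sol F|].
    It accepts the algorithm's output because [Cest = l 2^m = n 2^(m + 10)]
    gives back exactly the [m] the algorithm certified. *)
From mathcomp Require Import all_boot zify.
Set Implicit Arguments.
Unset Strict Implicit.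
Unset Printing Implicit Defensive.

Lemma sub_bv_mktuple N (g : nat -> bool) off len (t : bv len) :
  off + len <= N -> (forall j, j < len -> g (off + j) = nth false t j) ->
  sub_bv [tuple g j | j < N] off len = t.
Proof.
move=> le_N g_t; apply: eq_from_tnth => j.
have lt_jN : off + j < N by have := ltn_ord j; lia.
rewrite /sub_bv tnth_mktuple -[off + j]/(nat_of_ord (Ordinal lt_jN)).
by rewrite nth_mktuple g_t // (tnth_nth false).
Qed.

Section UniversalBlock.
Variables (m n U : nat) (alpha : bv m) (Y : nat -> bv n).

Definition universal_bit (j : nat) : bool :=
  if j < m then nth false alpha j
  else nth false (Y ((j - m) %/ n)) ((j - m) %% n).

Definition universal_block : bv (m + U * n) :=
  [tuple universal_bit j | j < m + U * n].

Lemma sub_bv_universal_alpha : sub_bv universal_block 0 m = alpha.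
Proof.
apply: sub_bv_mktuple => [|j lt_jm]; first lia.
by rewrite /universal_bit add0n lt_jm.
Qed.

Lemma sub_bv_universal_y i : i < U -> sub_bv universal_block (m + i * n) n = Y i.
Proof.
move=> lt_iU; apply: sub_bv_mktuple => [|j lt_jn]; first nia.
rewrite /universal_bit ifN; last lia.
have -> : m + i * n + j - m = i * n + j by lia.
by rewrite divnMDl ?modnMDl ?divn_small ?modn_small ?addn0 //; lia.
Qed.

End UniversalBlock.

Lemma card_fiber_bounds (T V : finType) (f : T -> V) (A : {set T}) lo hi :
  (forall a, lo <= #|[set x in A | f x == a]| <= hi) ->
  lo * #|V| <= #|A| <= hi * #|V|.
Proof.
move=> fiber_bounds.
have -> : #|A| = \sum_(a : V) #|[set x in A | f x == a]|.
  rewrite -sum1_card (partition_big f xpredT) //=.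
  by apply: eq_bigr => a _; rewrite -sum1_card; apply: eq_bigl => x; rewrite inE.
rewrite mulnC [hi * _]mulnC -!sum_nat_const.
by apply/andP; split; apply: leq_sum => a _; case/andP: (fiber_bounds a).
Qed.

Section Cells.
Variables (H : hashFamily) (n : nat) (F : bv n -> bool) (m : nat) (hs : seq bool).
Hypothesis cells_hs : cells_holds_with H F m hs.

Let h := @heval H n m hs.
Let cell (a : bv m) := [set x in Sol F | h x == a].

Lemma cells_holds_with_card_ge a : ell_par n <= #|cell a|.
Proof.
have [z] := cells_hs (universal_block (u_par n).+1 a (fun=> nseq_tuple n false)).
rewrite /cells_matrix sub_bv_universal_alpha.
case/and3P=> _ /forallP z_in /forallP z_uniq.
pose zz (i : 'I_(ell_par n)) := sub_bv z (i * n) n.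
have zz_inj : injective zz.
  move=> i j; rewrite /zz => eq_ij; have [lt_ij|lt_ji|/val_inj //] := ltngtP i j.
  - by move/forallP/(_ j): (z_uniq i); rewrite lt_ij eq_ij eqxx.
  - by move/forallP/(_ i): (z_uniq j); rewrite lt_ji eq_ij eqxx.
rewrite -[ell_par n]card_ord -(card_imset (mem 'I_(ell_par n)) zz_inj).
apply/subset_leq_card/subsetP => _ /imsetP[i _ ->].
by rewrite !inE; exact: z_in.
Qed.

Lemma cells_holds_with_card_le a : #|cell a| <= u_par n.
Proof.
rewrite leqNgt; apply/negP => lt_u_cell.
have lt_enum (i : 'I_(u_par n).+1) : i < size (enum (cell a)).
  by rewrite -cardE (leq_trans (ltn_ord i)).
pose Y i := nth (nseq_tuple n false) (enum (cell a)) i.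
have [z] := cells_hs (universal_block (u_par n).+1 a Y).
rewrite /cells_matrix sub_bv_universal_alpha => /and3P[y_collide _ _].
move: y_collide; rewrite (_ : [forall i, _] = true); last first.
  apply/forallP => i; rewrite sub_bv_universal_y //.
  by move: (mem_nth (nseq_tuple n false) (lt_enum i)); rewrite mem_enum !inE.
case/existsP=> i /existsP[j /andP[lt_ij]].
rewrite !sub_bv_universal_y // /Y nth_uniq ?enum_uniq ?lt_enum //.
by move/eqP=> eq_ij; rewrite eq_ij ltnn in lt_ij.
Qed.

Lemma cells_holds_with_card_Sol :
  ell_par n * 2 ^ m <= #|Sol F| <= u_par n * 2 ^ m.
Proof.
have <- : #|{: bv m}| = 2 ^ m by rewrite card_tuple card_bool.
apply: (card_fiber_bounds (f := h)) => a.
by rewrite cells_holds_with_card_ge cells_holds_with_card_le.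
Qed.

End Cells.

Lemma trunc_log_divn_bounds n C : 0 < C %/ n ->
  n * 2 ^ trunc_log 2 (C %/ n) <= C < n * 2 ^ (trunc_log 2 (C %/ n)).+1.
Proof.
move=> q_gt0; have n_gt0 : 0 < n by case: n q_gt0; rewrite ?divn0.
have := trunc_logP (isT : 1 < 2) q_gt0; have := trunc_log_ltn (C %/ n) (isT : 1 < 2).
have := leq_divM C n; have := ltn_ceil C n_gt0.
move: (trunc_log 2 _) => k; move: (C %/ n) => q; nia.
Qed.

Lemma within_factor_16_of_dyadic_bounds n C S k : 10 <= k ->
  n * 2 ^ k <= C < n * 2 ^ k.+1 ->
  ell_par n * 2 ^ (k - 10) <= S <= u_par n * 2 ^ (k - 10) ->
  within_factor 16 C S.
Proof.
move=> k_ge10; rewrite expnS; have -> : 2 ^ k = 1024 * 2 ^ (k - 10).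
  by rewrite -[1024]/(2 ^ 10) -expnD subnKC.
(* Literals this large are kept as [Nat.of_num_uint _], opaque to [lia]. *)
rewrite /ell_par /u_par (_ : 16384 = 16 * 1024) // /within_factor.
move: (2 ^ (k - 10)) => P; nia.
Qed.

Lemma trunc_log_ECC_estimate n m : 0 < n ->
  trunc_log 2 (ell_par n * 2 ^ m %/ n) = m + 10.
Proof.
move=> n_gt0; rewrite /ell_par mulnAC mulnK // -[1024]/(2 ^ 10) -expnD.
by rewrite addnC trunc_expnK.
Qed.

Section Auditor.
Variables (H : hashFamily) (n : nat) (F : bv n -> bool) (Cest : nat) (cert : seq bool).

Lemma auditor_query_nvars : s2_nvars (auditor_query H F Cest cert) <= 17410 * n ^ 2.
Proof.
rewrite (_ : 17410 = 17 * 1024 + 2) // /auditor_query /s2_nvars.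
case: ifP => [/andP[_ le_k] | _] //=.
rewrite /u_par /ell_par (_ : 16384 = 16 * 1024) //; nia.
Qed.

Lemma auditor_accepts_cells :
  auditor_accepts H F Cest cert ->
  let k := trunc_log 2 (Cest %/ n) in
  10 <= k <= n + 10 /\ cells_holds_with H F (k - 10) cert.
Proof.
rewrite /auditor_accepts /auditor_query; case: ifP => // _.
by case/(_ [tuple]).
Qed.

Lemma ECC_outputs_auditor_accepts :
  ECC_outputs H F Cest cert -> auditor_accepts H F Cest cert.
Proof.
case=> m [/andP[m_ge1 m_le] _ _ cells ->].
rewrite /auditor_accepts /auditor_query trunc_log_ECC_estimate; last lia.
by rewrite addnK ifT //; lia.
Qed.

Lemma auditor_accepts_within_factor :
  auditor_accepts H F Cest cert -> within_factor 16 Cest #|Sol F|.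
Proof.
move/auditor_accepts_cells => /= [/andP[k_ge10 _] /cells_holds_with_card_Sol].
have q_gt0 : 0 < Cest %/ n by rewrite lt0n; apply: contraTneq k_ge10 => ->.
exact: within_factor_16_of_dyadic_bounds k_ge10 (trunc_log_divn_bounds q_gt0).
Qed.

End Auditor.

Theorem corollary4p3 :
  exists c : nat,
    forall (H : hashFamily) (n : nat) (F : bv n -> bool)
           (Cest : nat) (cert : seq bool),
      [/\ s2_nvars (auditor_query H F Cest cert) <= c * n ^ 2,
          ECC_outputs H F Cest cert -> auditor_accepts H F Cest cert &
          auditor_accepts H F Cest cert -> within_factor 16 Cest #|Sol F| ].
Proof.
exists 17410 => H n F Cest cert; split.
- exact: auditor_query_nvars.
- exact: ECC_outputs_auditor_accepts.
- exact: auditor_accepts_within_factor.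
Qed.
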